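(* In the setting described in the context, the length $N$ of any full route satisfies $N\le b^{\max}|E|/2$, where $b^{\max}=\max_{e\in E}b(e)$.
   Context: Let $G=(V,E)$ be a finite bipartite graph with color classes $W$ and $F$; the edge joining $w\in W$ and $f\in F$ is written $wf$. Let $b\in\mathbb Z_+^E$ be capacities. For $v\in V$, let $E_v$ be the set of edges incident to $v$, $\mathcal B_v=\{z\in\mathbb Z_+^{E_v}: z(e)\le b(e)\}$, $\mathbf 1^e$ the unit vector of $e$, $|z|=\sum_e|z(e)|$, $\wedge,\vee$ componentwise min and max. Each $v$ has a choice function $C_v:\mathcal B_v\to\mathcal B_v$ with $C_v(z)\le z$, satisfying for all $z,z'$: (A1) $z\ge z'\ge C_v(z)\Rightarrow C_v(z')=C_v(z)$; (A2) $z\ge z'\Rightarrow C_v(z)\wedge z'\le C_v(z')$; (A3) $z\ge z'\Rightarrow |C_v(z)|\ge|C_v(z')|$. Acceptable: $C_v(z)=z$; for distinct acceptable $z,z'$, $z'\prec_v z$ iff $C_v(z\vee z')=z$. $x_v$ is the restriction of $x$ to $E_v$; a g-matching is $x\in\mathbb Z_+^E$, $x\le b$, all $x_v$ acceptable; $x\prec_F y$ (distinct) iff $x_f\preceq_f y_f$ for all $f\in F$. Edge $e\in E_v$ is interesting for $v$ under acceptable $z$ if some $z'\in\mathcal B_v$ has $z'(e)>z(e)$, $z'(e')=z(e')$ for $e'\ne e$, $C_v(z')(e)>z(e)$; $e=wf$ blocks g-matching $x$ if it is interesting for $w$ under $x_w$ and for $f$ under $x_f$. $\mathcal S$ is the set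 of g-matchings with no blocking edge (stable); $(\mathcal S,\prec_F)$ is a nonempty finite distributive lattice with minimum $x^{\min}$ and maximum $x^{\max}$. Rotations: for $x\in\mathcal S$, $U_F^+(x)$ = edges $wf$ interesting for $f$ under $x_f$; $U_F^-(x)$ = edges $wf$ with $x(wf)>0$ not interesting for $f$. Legal $f$-pair: $(a,c)$, $a\in U_F^+(x)\cap E_f$, $c\in E_f\setminus\{a\}$, $C_f(x_f+\mathbf 1^a)=x_f+\mathbf 1^a-\mathbf 1^c$. Legal $w$-pair: $(c,a)$, $c\in U_F^-(x)\cap E_w$, $a\in U_F^+(x)\cap E_w$, $x_w+\mathbf 1^a-\mathbf 1^c$ acceptable for $w$; essential if no $d\in(U_F^+(x)\cap E_w)\setminus\{a\}$ is interesting for $w$ under $x_w+\mathbf 1^a-\mathbf 1^c$. Digraph with vertices $w^e,f^e$ for each $e=wf\in U_F^+(x)\cup U_F^-(x)$, arcs $(w^a,f^a)$ ($a\in U_F^+$), $(f^c,w^c)$ ($c\in U_F^-$), $(f^a,f^c)$ for legal $f$-pairs, $(w^c,w^a)$ for essential $w$-pairs; after repeatedly deleting vertices with no entering arc, the remaining directed cycles correspond to cyclic sequences $(a_1,c_1,\dots,a_k,c_k)$ of distinct edges of $G$, the rotations $R\in\mathcal R(x)$ applicable to $x$, with $\chi^R$ equal to $+1$ on the $a_i$, $-1$ on the $c_i$, $0$ elsewhere. $\tau_R(x)$ is the maximum $\lambda$ with $x+i\chi^R\in\mathcal S$ for $i=1,\dots,\lambda$. A full route is a sequence $x^{\min}=x_0,\dots,x_N=x^{\max}$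 with $x_i=x_{i-1}+\tau_{R_i}(x_{i-1})\chi^{R_i}$, $R_i\in\mathcal R(x_{i-1})$; $N$ is its length. *)

From mathcomp Require Import all_boot.
Set Implicit Arguments. Unset Strict Implicit. Unset Printing Implicit Defensive.

(* Bipartite graph: color classes W, F (finite types), edge set E (finite type),
   edge e joins ew e \in W and ef e \in F.
   A vector in Z_+^{E_v} is represented by a vector in Z_+^E vanishing outside E_v. *)

Section Model.
Variables (W F E : finType) (ew : E -> W) (ef : E -> F) (b : {ffun E -> nat}).
Variable C : (W + F)%type -> {ffun E -> nat} -> {ffun E -> nat}.

Definition vec := {ffun E -> nat}.

Definition inc (v : (W + F)%type) (e : E) : bool :=
  match v with inl w => ew e == w | inr f => ef e == f end.

Definition restr v (x : vec) : vec := [ffun e => if inc v e then x e else 0].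

Definition inB v (z : vec) : bool :=
  [forall e, (z e <= b e) && (~~ inc v e ==> (z e == 0))].

Definition vle (z z' : vec) : bool := [forall e, z e <= z' e].
Definition vmeet (z z' : vec) : vec := [ffun e => minn (z e) (z' e)].
Definition vjoin (z z' : vec) : vec := [ffun e => maxn (z e) (z' e)].
Definition vsize (z : vec) : nat := \sum_(e : E) z e.

Definition choice_axioms v : Prop :=
  (forall z, inB v z -> vle (C v z) z) /\
  (forall z z', inB v z -> inB v z' -> vle z' z -> vle (C v z) z' ->
     C v z' = C v z) /\
  (forall z z', inB v z -> inB v z' -> vle z' z ->
     vle (vmeet (C v z) z') (C v z')) /\
  (forall z z', inB v z -> inB v z' -> vle z' z ->
     vsize (C v z') <= vsize (C v z)).

Definition acceptable v (z : vec) : bool := inB v z && (C v z == z).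

Definition pref_le v (z' z : vec) : bool := (z' == z) || (C v (vjoin z z') == z).

Definition unitv (a : E) : vec := [ffun e => nat_of_bool (e == a)].

Definition interesting v (z : vec) (e : E) : Prop :=
  exists z' : vec, inB v z' /\ z e < z' e /\
    (forall e', e' != e -> z' e' = z e') /\ z e < C v z' e.

Definition g_matching (x : vec) : Prop :=
  vle x b /\ forall v, acceptable v (restr v x).

Definition blocking (x : vec) (e : E) : Prop :=
  interesting (inl (ew e)) (restr (inl (ew e)) x) e /\
  interesting (inr (ef e)) (restr (inr (ef e)) x) e.

Definition stable (x : vec) : Prop := g_matching x /\ forall e, ~ blocking x e.

Definition prefF (x y : vec) : Prop :=
  forall f : F, pref_le (inr f) (restr (inr f) x) (restr (inr f) y).

Definition Uplus (x : vec) (e : E) : Prop :=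
  interesting (inr (ef e)) (restr (inr (ef e)) x) e.
Definition Uminus (x : vec) (e : E) : Prop := 0 < x e /\ ~ Uplus x e.

(* legal f-pair (a,c): C_f(x_f + 1^a) = x_f + 1^a - 1^c (integer equation) *)
Definition legal_f (x : vec) (a c : E) : Prop :=
  Uplus x a /\ ef c = ef a /\ c <> a /\
  let z : vec := [ffun e => restr (inr (ef a)) x e + (e == a)] in
  forall e, C (inr (ef a)) z e + (e == c) = z e.

(* x_w + 1^a - 1^c  (subtraction exact when x c > 0 and c <> a) *)
Definition wmove (x : vec) (c a : E) : vec :=
  [ffun e => restr (inl (ew a)) x e + (e == a) - (e == c)].

Definition legal_w (x : vec) (c a : E) : Prop :=
  Uminus x c /\ Uplus x a /\ ew c = ew a /\
  acceptable (inl (ew a)) (wmove x c a).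

Definition essential (x : vec) (c a : E) : Prop :=
  legal_w x c a /\
  forall d, Uplus x d -> ew d = ew a -> d <> a ->
    ~ interesting (inl (ew a)) (wmove x c a) d.

(* digraph: vertex (e,false) = w^e, (e,true) = f^e *)
Definition dnode (x : vec) (u : E * bool) : Prop := Uplus x u.1 \/ Uminus x u.1.

Definition darc (x : vec) (u v : E * bool) : Prop :=
  dnode x u /\ dnode x v /\
  (((u.2 = false /\ v.2 = true /\ u.1 = v.1 /\ Uplus x u.1) \/
    (u.2 = true /\ v.2 = false /\ u.1 = v.1 /\ Uminus x u.1)) \/
   ((u.2 = true /\ v.2 = true /\ legal_f x u.1 v.1) \/
    (u.2 = false /\ v.2 = false /\ essential x u.1 v.1))).

Fixpoint alive (x : vec) (k : nat) (u : E * bool) : Prop :=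
  match k with
  | 0 => dnode x u
  | k'.+1 => alive x k' u /\ exists u', alive x k' u' /\ darc x u' u
  end.

Definition remaining (x : vec) (u : E * bool) : Prop := forall k, alive x k u.

(* R = (a_1,c_1,...,a_k,c_k) is a rotation applicable to x: a directed cycle
   w^{a_1} -> f^{a_1} -> f^{c_1} -> w^{c_1} -> w^{a_2} -> ... -> w^{a_1}
   of the remaining digraph, with distinct edges *)
Definition rotation (x : vec) (a c : seq E) : Prop :=
  match a with
  | [::] => False
  | a0 :: _ =>
    let k := size a in
    size c = k /\ uniq (a ++ c) /\
    forall i, i < k ->
      let ai := nth a0 a i in let ci := nth a0 c i in
      let an := nth a0 a ((i.+1) %% k) in
      [/\ remaining x (ai, false), remaining x (ai, true),
          remaining x (ci, true) & remaining x (ci, false)] /\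
      [/\ darc x (ai, false) (ai, true), darc x (ai, true) (ci, true),
          darc x (ci, true) (ci, false) & darc x (ci, false) (an, false)]
  end.

Definition shift (x : vec) (a c : seq E) (i : nat) : vec :=
  [ffun e => if e \in a then x e + i else if e \in c then x e - i else x e].

(* x + i chi^R is a nonnegative vector lying in S *)
Definition shift_ok (x : vec) (a c : seq E) (i : nat) : Prop :=
  (forall e, e \in c -> i <= x e) /\ stable (shift x a c i).

Definition is_tau (x : vec) (a c : seq E) (lam : nat) : Prop :=
  (forall i, 1 <= i <= lam -> shift_ok x a c i) /\
  (forall mu, (forall i, 1 <= i <= mu -> shift_ok x a c i) -> mu <= lam).

Definition route_step (x y : vec) : Prop :=
  exists a c lam, rotation x a c /\ is_tau x a c lam /\ y = shift x a c lam.

(* xs = [:: x_0; ...; x_N] is a full route; its length is N = (size xs).-1 *)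
Definition full_route (xmin xmax : vec) (xs : seq vec) : Prop :=
  match xs with
  | [::] => False
  | x0 :: _ =>
    x0 = xmin /\ last x0 xs = xmax /\
    forall i, i.+1 < size xs -> route_step (nth x0 xs i) (nth x0 xs i.+1)
  end.

End Model.

(* Consider the potential
     phi(x) = sum_(e in U+(x)) x(e) + sum_(e notin U+(x)) b(e) <= b^max |E|.
   A rotation step x' = x + tau chi^R raises phi by at least 2: U+(x') is contained
   in U+(x), because x' exceeds x only on the edges a_i, which lie in U+(x); each a_i
   gains tau, the edges c_i lie outside U+(x), tau >= 1 because x + chi^R is itself
   stable, and a rotation has k >= 2 since G has no parallel edges. Hence
   2N <= phi(x^max). *)

From mathcomp Require Import all_boot zify.
From Stdlib Require Import Classical ClassicalEpsilon.
Set Implicit Arguments. Unset Strict Implicit. Unset Printing Implicit Defensive.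

Lemma sum_mem_count (T : finType) (s : seq T) (p : pred T) : uniq s ->
  \sum_(e : T) ((e \in s) && p e) = count p s.
Proof.
move=> Us; rewrite -sum1_count [RHS]big_mkcond (big_uniq _ Us) [RHS]big_mkcond /=.
by apply: eq_bigr => e _; case: (e \in s); case: (p e).
Qed.

Lemma count_zip (T : eqType) (p : pred T) (s t : seq T) : size s = size t ->
  (forall q, q \in zip s t -> p q.1 = p q.2) -> count p s = count p t.
Proof.
move=> st Hp.
rewrite -[in LHS](unzip1_zip (eq_leq st)) -[in RHS](unzip2_zip (eq_leq (esym st))).
by rewrite !count_map; apply: eq_in_count => q /Hp.
Qed.

Lemma mem_zip (S T : eqType) (s : seq S) (t : seq T) p :
  p \in zip s t -> p.1 \in s /\ p.2 \in t.
Proof.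
elim: s t => [|x s IH] [|y t] //= pin; rewrite !in_cons.
by case/orP: pin => [/eqP -> | /IH [-> ->]]; rewrite ?eqxx ?orbT.
Qed.

Lemma zip_fst (S T : eqType) (s : seq S) (t : seq T) x : size s <= size t ->
  x \in s -> exists2 p, p \in zip s t & p.1 = x.
Proof. by move=> st; rewrite -{1}(unzip1_zip st) => /mapP [p pin ->]; exists p. Qed.

Lemma zip_snd (S T : eqType) (s : seq S) (t : seq T) y : size t <= size s ->
  y \in t -> exists2 p, p \in zip s t & p.2 = y.
Proof. by move=> ts; rewrite -{1}(unzip2_zip ts) => /mapP [p pin ->]; exists p. Qed.

Lemma zip_nth (S T : eqType) (s : seq S) (t : seq T) x0 y0 p : size s = size t ->
  p \in zip s t -> exists2 i, i < size s & p = (nth x0 s i, nth y0 t i).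
Proof.
move=> st pin; exists (index p (zip s t)).
  by rewrite -[X in _ < X]minnn {2}st -size_zip index_mem.
by rewrite -nth_zip // nth_index.
Qed.

Lemma nth_rot1 (T : Type) x0 (s : seq T) i : i < size s ->
  nth x0 (rot 1 s) i = nth x0 s (i.+1 %% size s).
Proof.
case: s => [|y s] //= lt; rewrite rot1_cons nth_rcons.
case: (ltngtP i (size s)) => [lt2|gt|->]; first by rewrite modn_small.
  by move: lt; rewrite ltnS leqNgt gt.
by rewrite modnn.
Qed.

Section Vectors.
Variable E : finType.
Implicit Types (z u : vec E) (d e : E).

Definition setv z d n : vec E := [ffun e => if e == d then n else z e].

Lemma setvE z d n e : setv z d n e = if e == d then n else z e.
Proof. by rewrite ffunE. Qed.

Lemma vleP z u : reflect (forall e, z e <= u e) (vle z u).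
Proof. exact: forallP. Qed.

Lemma vle_refl z : vle z z.
Proof. by apply/vleP. Qed.

Lemma vle_trans z u y : vle z u -> vle u y -> vle z y.
Proof. by move=> /vleP zu /vleP uy; apply/vleP => e; exact: leq_trans (zu e) (uy e). Qed.

Lemma vle_joinl z u : vle z (vjoin z u).
Proof. by apply/vleP => e; rewrite ffunE leq_maxl. Qed.

Lemma vle_joinr z u : vle u (vjoin z u).
Proof. by apply/vleP => e; rewrite ffunE leq_maxr. Qed.

Lemma vjoin_id z : vjoin z z = z.
Proof. by apply/ffunP => e; rewrite ffunE maxnn. Qed.

Lemma vle_setv z d n : z d <= n -> vle z (setv z d n).
Proof. by move=> le; apply/vleP => e; rewrite setvE; case: eqP => [->|]. Qed.

Lemma vsize_mono z u : vle z u -> vsize z <= vsize u.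
Proof. by move=> /vleP zu; apply: leq_sum => e _. Qed.

Lemma vle_vsize_eq z u : vle z u -> vsize u <= vsize z -> z = u.
Proof.
move=> /vleP zu uz.
have split_u : vsize u = vsize z + \sum_e (u e - z e).
  by rewrite /vsize -big_split /=; apply: eq_bigr => e _; rewrite subnKC.
have : vsize z + \sum_e (u e - z e) <= vsize z + 0 by rewrite -split_u addn0.
rewrite leq_add2l leqn0 sum_nat_eq0 => /forallP H; apply/ffunP => e.
by apply/eqP; rewrite eqn_leq zu /= -subn_eq0; exact: (implyP (H e)).
Qed.

Lemma vsize_setv z d n : vsize (setv z d n) + z d = vsize z + n.
Proof.
rewrite /vsize (bigD1 d) //= [in RHS](bigD1 d) //= setvE eqxx.
rewrite (eq_bigr z) => [|e /negbTE ne]; last by rewrite setvE ne.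
by rewrite -addnA addnC [z d + _]addnC.
Qed.

Lemma sum_eq1 d : \sum_(e : E) (e == d) = 1.
Proof. by rewrite (bigD1 d) //= eqxx big1 // => e /negbTE ->. Qed.

Definition addv z d : vec E := [ffun e => z e + (e == d)].

Lemma addvE z d e : addv z d e = z e + (e == d).
Proof. by rewrite ffunE. Qed.

Lemma vsize_addv z d : vsize (addv z d) = (vsize z).+1.
Proof.
by rewrite /vsize; under eq_bigr do rewrite addvE; rewrite big_split /= sum_eq1 addn1.
Qed.

End Vectors.

Section ChoiceFunction.
Variables (W F E : finType) (ew : E -> W) (ef : E -> F) (b : vec E).
Variable C : (W + F)%type -> vec E -> vec E.
Variable v : (W + F)%type.
Implicit Types (z u y w Y Z : vec E) (d e : E).

Local Notation inB := (inB ew ef b v).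
Local Notation interesting := (interesting ew ef b C v).
Local Notation acceptable := (acceptable ew ef b C v).
Local Notation Cv := (C v).

Lemma inBP z : reflect (forall e, z e <= b e /\ (~~ inc ew ef v e -> z e = 0)) (inB z).
Proof.
apply: (iffP forallP) => H e.
  by case/andP: (H e) => le /implyP out; split => // /out /eqP.
by case: (H e) => le out; rewrite le /=; apply/implyP => /out ->.
Qed.

Lemma inB_le z u : inB u -> vle z u -> inB z.
Proof.
move=> /inBP Bu /vleP zu; apply/inBP => e; case: (Bu e) => le out; split.
  exact: leq_trans (zu e) le.
by move=> /out u0; apply/eqP; rewrite -leqn0 -u0 zu.
Qed.

Lemma inB_join z u : inB z -> inB u -> inB (vjoin z u).
Proof.
move=> /inBP Bz /inBP Bu; apply/inBP => e; rewrite ffunE.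
case: (Bz e) (Bu e) => lez outz [leu outu]; split; first by rewrite geq_max lez.
by move=> out; rewrite outz ?outu.
Qed.

Lemma inB_inc z d : inB z -> 0 < z d -> inc ew ef v d.
Proof. by move=> /inBP /(_ d) [_ out]; apply: contraTT => /out ->. Qed.

Lemma acceptable_inB z : acceptable z -> inB z.
Proof. by case/andP. Qed.

Lemma acceptable_fixed z : acceptable z -> Cv z = z.
Proof. by case/andP => _ /eqP. Qed.

Lemma interesting_setvP z d : interesting z d <->
  exists n, [/\ inB (setv z d n), z d < n & z d < Cv (setv z d n) d].
Proof.
split=> [[w [Bw [lt [eq_off gt]]]] | [n [Bw lt gt]]].
  exists (w d); suff -> : setv z d (w d) = w by [].
  by apply/ffunP => e; rewrite setvE; case: eqVneq => [->|/eq_off].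
exists (setv z d n); split=> //; split; first by rewrite setvE eqxx.
by split=> // e /negbTE ne; rewrite setvE ne.
Qed.

Hypothesis HCv : choice_axioms ew ef b C v.

Lemma choice_le Z : inB Z -> vle (Cv Z) Z.
Proof. by case: HCv => H _; exact: H. Qed.

Lemma choice_subst Z z : inB Z -> vle z Z -> vle (Cv Z) z -> Cv z = Cv Z.
Proof. by case: HCv => _ [H _] BZ zZ; apply: H => //; exact: inB_le BZ zZ. Qed.

Lemma choice_meet Z z e : inB Z -> vle z Z -> minn (Cv Z e) (z e) <= Cv z e.
Proof.
case: HCv => _ [_ [H _]] BZ zZ.
by move: (H Z z BZ (inB_le BZ zZ) zZ) => /vleP /(_ e); rewrite ffunE.
Qed.

Lemma choice_vsize_mono Z z : inB Z -> vle z Z -> vsize (Cv z) <= vsize (Cv Z).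
Proof. by case: HCv => _ [_ [_ H]] BZ zZ; apply: H => //; exact: inB_le BZ zZ. Qed.

Lemma acceptable_choice Z y : inB Z -> vle y Z -> Cv Z = y -> acceptable y.
Proof.
move=> BZ yZ CZ; rewrite /acceptable (inB_le BZ yZ) /=.
by rewrite (choice_subst BZ yZ) ?CZ ?vle_refl.
Qed.

Lemma interesting_of_choice_gt Z y d : inB Z -> vle y Z -> y d < Cv Z d ->
  interesting y d.
Proof.
move=> BZ yZ lt; apply/interesting_setvP; exists (Cv Z d).
have wZ : vle (setv y d (Cv Z d)) Z.
  apply/vleP => e; rewrite setvE; case: eqP => [->|_]; last exact: (vleP _ _ yZ).
  exact: (vleP _ _ (choice_le BZ)).
split=> //; first exact: inB_le BZ wZ.
by have := choice_meet d BZ wZ; rewrite setvE eqxx minnn; exact: leq_trans.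
Qed.

Lemma choice_le_of_not_interesting Z y d : inB Z -> vle y Z -> ~ interesting y d ->
  Cv Z d <= y d.
Proof.
move=> BZ yZ NI; rewrite leqNgt; apply/negP => lt.
exact: NI (interesting_of_choice_gt BZ yZ lt).
Qed.

Lemma choice_eq_of_not_interesting u Z : acceptable u -> inB Z -> vle u Z ->
  (forall d, u d < Z d -> ~ interesting u d) -> Cv Z = u.
Proof.
move=> Au BZ uZ NI.
suff CZu : vle (Cv Z) u by rewrite -(choice_subst BZ uZ CZu) acceptable_fixed.
apply/vleP => d; case: (ltnP (u d) (Z d)) => [lt|ge].
  exact: choice_le_of_not_interesting (NI d lt).
exact: leq_trans (vleP _ _ (choice_le BZ) d) ge.
Qed.

(* For a witness [w] raising [e] above [y], the choice at [vjoin Y w] is still [y],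
   hence so is the choice at [w]. *)
Lemma not_interesting_choice z y Y e : inB Y -> vle z Y -> vle y Y -> Cv Y = y ->
  ~ interesting z e -> ~ interesting y e.
Proof.
move=> BY zY yY CY NIz /interesting_setvP [n [Bw lt gt]].
set w := setv y e n in Bw gt; set Z := vjoin Y w.
have BZ : inB Z by exact: inB_join.
have [YZ wZ] := (vle_joinl Y w, vle_joinr Y w).
have CZy : vle (Cv Z) y.
  apply/vleP => d; have := choice_meet d BZ YZ; rewrite CY.
  case: (eqVneq d e) => [->|ne].
    have le := choice_le_of_not_interesting BZ (vle_trans zY YZ) NIz.
    by rewrite (minn_idPl (leq_trans le (vleP _ _ zY e))).
  have Zd : Z d = Y d.
    by rewrite ffunE setvE (negbTE ne); apply/maxn_idPl; exact: (vleP _ _ yY).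
  by rewrite -Zd (minn_idPl (vleP _ _ (choice_le BZ) d)).
have CZ : Cv Z = y.
  rewrite -(choice_subst BZ (vle_trans yY YZ) CZy).
  exact/acceptable_fixed/(acceptable_choice BY yY CY).
have := choice_subst BZ wZ; rewrite CZ => /(_ (vle_setv (ltnW lt))) Cw.
by move: gt; rewrite Cw ltnn.
Qed.

(* A witness [w] raising [a] above [u] would have [|C w| > |u| = |z| = |C Q|] for
   [Q >= w] obtained by raising [a] in [z], against (A3). *)
Lemma not_interesting_exchange z u a : acceptable z -> z a <= u a ->
  (forall e, e != a -> u e <= z e) -> vsize u = vsize z ->
  ~ interesting z a -> ~ interesting u a.
Proof.
move=> Az za uz su NIz /interesting_setvP [n [Bw lt gt]].
set w := setv u a n in Bw gt; set Q := setv z a n.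
have wQ : vle w Q.
  by apply/vleP => e; rewrite !setvE; case: eqVneq => [//|ne]; exact: uz.
have BQ : inB Q.
  apply: inB_le (inB_join Bw (acceptable_inB Az)) _.
  apply/vleP => e; rewrite setvE ffunE; case: eqP => [->|_]; last exact: leq_maxr.
  by rewrite setvE eqxx leq_maxl.
have CQ : Cv Q = z.
  apply: choice_eq_of_not_interesting => //; first exact/vle_setv/ltnW/(leq_ltn_trans za).
  by move=> d; rewrite setvE; case: eqP => [->|_] //; rewrite ltnn.
have up : vle (setv u a (u a).+1) (Cv w).
  apply/vleP => e; rewrite setvE; case: eqVneq => [->|ne]; first exact: gt.
  by have := choice_meet e BQ wQ; rewrite CQ setvE (negbTE ne) (minn_idPr (uz e ne)).
have := leq_trans (vsize_mono up) (choice_vsize_mono BQ wQ).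
by rewrite CQ -(leq_add2r (u a)) vsize_setv su addnS -addSn leq_add2r ltnn.
Qed.

Lemma choice_eq_of_cover (I : Type) (P : I -> Prop) (f : I -> vec E) y Z i0 :
  P i0 -> (forall i, P i -> acceptable (f i)) ->
  (forall i, P i -> vsize (f i) = vsize y) -> inB Z -> vle y Z ->
  (forall i d, P i -> f i d < Z d -> ~ interesting (f i) d) ->
  (forall d, exists2 i, P i & y d <= f i d) -> Cv Z = y.
Proof.
move=> Pi0 Af sf BZ yZ NI cover.
have BZf i : P i -> inB (vjoin Z (f i)).
  by move=> Pi; apply: inB_join => //; exact/acceptable_inB/Af.
have CZf i : P i -> Cv (vjoin Z (f i)) = f i.
  move=> Pi; apply: choice_eq_of_not_interesting; rewrite ?Af ?BZf ?vle_joinr //.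
  move=> d; rewrite ffunE => lt; apply: NI => //; move: lt.
  by case: (leqP (Z d) (f i d)) => [_|//]; rewrite ltnn.
apply/esym/vle_vsize_eq.
  apply/vleP => d; have [i Pi le] := cover d.
  have := choice_meet d (BZf i Pi) (vle_joinl Z (f i)); rewrite CZf //.
  by apply: leq_trans; rewrite leq_min le (vleP _ _ yZ).
by have := choice_vsize_mono (BZf i0 Pi0) (vle_joinl Z (f i0)); rewrite CZf // sf.
Qed.

End ChoiceFunction.

Definition asbool (P : Prop) : bool :=
  if excluded_middle_informative P then true else false.

Lemma asboolP (P : Prop) : reflect P (asbool P).
Proof. by rewrite /asbool; case: excluded_middle_informative => h; constructor. Qed.

Section StableMatchings.
Variables (W F E : finType) (ew : E -> W) (ef : E -> F) (b : vec E).
Variable C : (W + F)%type -> vec E -> vec E.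
Implicit Types (x y z : vec E) (a c d e : E).

Local Notation restr := (restr ew ef).
Local Notation inc := (inc ew ef).
Local Notation inB := (inB ew ef b).
Local Notation interesting := (interesting ew ef b C).
Local Notation acceptable := (acceptable ew ef b C).
Local Notation stable := (stable ew ef b C).
Local Notation Uplus := (Uplus ew ef b C).
Local Notation legal_f := (legal_f ew ef b C).
Local Notation legal_w := (legal_w ew ef b C).
Local Notation essential := (essential ew ef b C).
Local Notation wmove := (wmove ew ef).

Definition potential x : nat := \sum_e (if asbool (Uplus x e) then x e else b e).

Lemma restrE v x e : restr v x e = if inc v e then x e else 0.
Proof. by rewrite ffunE. Qed.

Lemma inB_restr v x : vle x b -> inB v (restr v x).
Proof.
move=> /vleP xb; apply/inBP => e; rewrite restrE.
by case: (inc v e) => //; split => //; exact: xb.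
Qed.

Lemma stable_le x : stable x -> vle x b.
Proof. by case=> [[]]. Qed.

Lemma stable_acceptable x v : stable x -> acceptable v (restr v x).
Proof. by case=> [[_ Ax] _]. Qed.

Lemma stable_not_interesting x e : stable x -> Uplus x e ->
  ~ interesting (inl (ew e)) (restr (inl (ew e)) x) e.
Proof. by case=> _ NB Uf Iw; apply: (NB e). Qed.

Lemma Uplus_lt x e : Uplus x e -> x e < b e.
Proof.
case=> z [/inBP /(_ e) [zb _] [lt _]].
by move: lt; rewrite restrE /= eqxx => /leq_trans; apply.
Qed.

Lemma potential_le x : vle x b -> potential x <= \sum_e b e.
Proof. by move=> /vleP xb; apply: leq_sum => e _; case: asboolP. Qed.

Lemma legal_f_choice_eq x a c : legal_f x a c ->
  (C (inr (ef a)) (addv (restr (inr (ef a)) x) a) c).+1 = x c.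
Proof.
case=> _ [efc [/eqP/negbTE ca eqC]]; have /= := eqC c.
by rewrite eqxx addn1 addvE restrE /= efc eqxx ca addn0.
Qed.

Lemma legal_f_vsize x a c : legal_f x a c ->
  vsize (C (inr (ef a)) (addv (restr (inr (ef a)) x) a)) = vsize (restr (inr (ef a)) x).
Proof.
case=> _ [_ [_ eqC]]; apply: succn_inj; rewrite -[RHS](vsize_addv _ a) -addn1.
by rewrite -(sum_eq1 c) /vsize -big_split; apply: eq_bigr => e _; exact: eqC.
Qed.

Lemma wmoveE x c a e : wmove x c a e = restr (inl (ew a)) x e + (e == a) - (e == c).
Proof. by rewrite ffunE. Qed.

Lemma legal_w_neq x c a : legal_w x c a -> c != a.
Proof. by case=> [[_ NUc] [Ua _]]; apply/eqP => ca; apply: NUc; rewrite ca. Qed.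

Lemma vsize_wmove x c a : legal_w x c a ->
  vsize (wmove x c a) = vsize (restr (inl (ew a)) x).
Proof.
move=> lw; have ca := legal_w_neq lw; case: lw => [[xc _] [_ [ewc _]]].
have pt e : wmove x c a e + (e == c) = addv (restr (inl (ew a)) x) a e.
  rewrite wmoveE addvE; case: (eqVneq e c) => [->|_] /=; last by rewrite subn0 addn0.
  by rewrite (negbTE ca) restrE /= ewc eqxx addn0 subn1 addn1 prednK.
apply: succn_inj; rewrite -[RHS](vsize_addv _ a) /vsize.
rewrite [RHS](eq_bigr (fun e => wmove x c a e + (e == c))) => [|e _]; last exact/esym/pt.
by rewrite big_split /= sum_eq1 addn1.
Qed.

Hypothesis HC : forall v, choice_axioms ew ef b C v.

Lemma essential_not_interesting x c a d : stable x -> essential x c a ->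
  Uplus x d -> ew d = ew a -> ~ interesting (inl (ew a)) (wmove x c a) d.
Proof.
move=> Hx [lw NI] Ud ewd; case: (eqVneq d a) => [da|/eqP nda]; last exact: NI.
subst d; have /negbTE ac : a != c by rewrite eq_sym; exact: legal_w_neq lw.
apply: (not_interesting_exchange (HC _) (stable_acceptable _ Hx)).
- by rewrite wmoveE eqxx ac subn0 leq_addr.
- by move=> e /negbTE ea; rewrite wmoveE ea addn0 leq_subr.
- exact: vsize_wmove.
- exact: stable_not_interesting.
Qed.

Lemma Uplus_of_choice_join x y e : vle x b -> vle y b ->
  C (inr (ef e)) (vjoin (restr (inr (ef e)) x) (restr (inr (ef e)) y)) =
    restr (inr (ef e)) y ->
  Uplus y e -> Uplus x e.
Proof.
move=> xb yb CY Uy; apply: NNPP => NUx; move: Uy.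
apply: (not_interesting_choice (HC _) _ (vle_joinl _ _) (vle_joinr _ _) CY NUx).
exact: inB_join (inB_restr _ xb) (inB_restr _ yb).
Qed.

Section Increase.
Variables x y : vec E.
Hypotheses (Hx : stable x) (Hy : stable y).
Hypothesis Hinc : forall e, x e < y e -> Uplus x e.

Lemma inB_restr_join v : inB v (vjoin (restr v x) (restr v y)).
Proof. exact: inB_join (inB_restr _ (stable_le Hx)) (inB_restr _ (stable_le Hy)). Qed.

Lemma choice_join_w w :
  C (inl w) (vjoin (restr (inl w) x) (restr (inl w) y)) = restr (inl w) x.
Proof.
apply: (choice_eq_of_not_interesting (HC _) (stable_acceptable _ Hx) (inB_restr_join _)).
  exact: vle_joinl.
move=> d; rewrite [vjoin _ _ _]ffunE !restrE /=.
case: eqP => [<- | _]; last by rewrite maxnn ltnn.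
by rewrite leq_max ltnn => /Hinc; exact: stable_not_interesting.
Qed.

(* Where the choice at [f] exceeds [y], [y] lies below [x]; such an edge would block
   [y], being interesting at [w] because the choice at [w] is [x_w]. *)
Lemma choice_join_f f :
  C (inr f) (vjoin (restr (inr f) x) (restr (inr f) y)) = restr (inr f) y.
Proof.
have BZ := inB_restr_join (inr f).
suff CZy : vle (C (inr f) (vjoin (restr (inr f) x) (restr (inr f) y))) (restr (inr f) y).
  rewrite -(choice_subst (HC _) BZ (vle_joinr _ _) CZy).
  exact: acceptable_fixed (stable_acceptable _ Hy).
apply/vleP => d; rewrite leqNgt; apply/negP => gt.
have If := interesting_of_choice_gt (HC _) BZ (vle_joinr _ _) gt.
have := vleP _ _ (choice_le (HC _) BZ) d; move: gt.
rewrite [vjoin _ _ _]ffunE !restrE /= => /leq_trans lt /lt.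
case: eqP => [efd|_]; last by rewrite maxnn.
rewrite leq_max ltnn orbF => yx.
have Iw : interesting (inl (ew d)) (restr (inl (ew d)) y) d.
  apply: (interesting_of_choice_gt (HC _) (inB_restr_join _) (vle_joinr _ _)).
  by rewrite choice_join_w !restrE /= eqxx.
by case: Hy => _ /(_ d); apply; split => //; rewrite efd.
Qed.

Lemma Uplus_antimono e : Uplus y e -> Uplus x e.
Proof. exact: Uplus_of_choice_join (stable_le Hx) (stable_le Hy) (choice_join_f _). Qed.

End Increase.

End StableMatchings.

Arguments inB_restr {W F E ew ef b} v {x}.

(* [zip a c] lists the legal f-pairs (a_i, c_i) of the rotation, and
   [zip c (rot 1 a)] its essential w-pairs (c_i, a_(i+1)). *)
Section Rotation.
Variables (W F E : finType) (ew : E -> W) (ef : E -> F) (b : vec E).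
Variable C : (W + F)%type -> vec E -> vec E.
Hypothesis HC : forall v, choice_axioms ew ef b C v.
Variables (x : vec E) (a c : seq E).
Hypothesis Hx : stable ew ef b C x.
Hypothesis Hsize : size c = size a.
Hypothesis Huniq : uniq (a ++ c).
Hypothesis Hlegal_f : forall p, p \in zip a c -> legal_f ew ef b C x p.1 p.2.
Hypothesis Hessential : forall p, p \in zip c (rot 1 a) -> essential ew ef b C x p.1 p.2.
Implicit Types (d e : E) (z : vec E).

Local Notation restr := (restr ew ef).
Local Notation inc := (inc ew ef).
Local Notation inB := (inB ew ef b).
Local Notation stable := (stable ew ef b C).
Local Notation Uplus := (Uplus ew ef b C).
Local Notation Uminus := (Uminus ew ef b C).
Local Notation wmove := (wmove ew ef).
Local Notation potential := (potential ew ef b C).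
Local Notation y1 := (shift x a c 1).
Local Notation join_f f := (vjoin (restr (inr f) x) (restr (inr f) y1)).

Lemma shiftE z i e :
  shift z a c i e = if e \in a then z e + i else if e \in c then z e - i else z e.
Proof. by rewrite ffunE. Qed.

Lemma in_a_notin_c e : e \in a -> e \in c = false.
Proof.
move: Huniq; rewrite cat_uniq => /and3P [_ /hasPn ac _] ea.
by apply/negP => /ac; rewrite /= ea.
Qed.

Lemma in_c_notin_a e : e \in c -> e \in a = false.
Proof. by move=> ec; apply/negP => /in_a_notin_c; rewrite ec. Qed.

Lemma size_rot_a : size (rot 1 a) = size c.
Proof. by rewrite size_rot Hsize. Qed.

Lemma Uplus_a e : e \in a -> Uplus x e.
Proof. by case/(zip_fst (eq_leq (esym Hsize))) => p /Hlegal_f [Up _] <-. Qed.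

Lemma Uminus_c e : e \in c -> Uminus x e.
Proof. by case/(zip_fst (eq_leq (esym size_rot_a))) => p /Hessential [[Um _] _] <-. Qed.

Lemma ef_pair p : p \in zip a c -> ef p.2 = ef p.1.
Proof. by case/Hlegal_f => _ []. Qed.

Lemma ew_pair p : p \in zip c (rot 1 a) -> ew p.1 = ew p.2.
Proof. by case/Hessential => [[_ [_ []]]]. Qed.

Lemma count_inc v : count (inc v) c = count (inc v) a.
Proof.
case: v => [w|f].
  have ra : perm_eq (rot 1 a) a by rewrite perm_rot.
  rewrite -(permP ra); apply: count_zip => [|p /ew_pair /= ->]; last by [].
  exact/esym/size_rot_a.
by apply/esym/count_zip => // p /ef_pair /= ->.
Qed.

Lemma restr_shift_off v i : ~~ has (inc v) a -> restr v (shift x a c i) = restr v x.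
Proof.
move=> na; have nc : ~~ has (inc v) c by rewrite !has_count count_inc in na *.
apply/ffunP => e; rewrite !restrE shiftE; case ve: (inc v e) => //.
have [ea ec] : e \in a = false /\ e \in c = false.
  by split; apply/negP => ein; [move/hasP: na | move/hasP: nc]; apply; exists e.
by rewrite ea ec.
Qed.

Lemma vsize_restr_shift1 v : vsize (restr v y1) = vsize (restr v x).
Proof.
suff : vsize (restr v y1) + count (inc v) c = vsize (restr v x) + count (inc v) a.
  by rewrite count_inc => /addIn.
move: Huniq; rewrite cat_uniq => /and3P [ua _ uc].
rewrite -(sum_mem_count _ ua) -(sum_mem_count _ uc) /vsize -!big_split /=.
apply: eq_bigr => e _; rewrite !restrE shiftE; case: (inc v e); rewrite ?andbF ?andbT //.
case ea: (e \in a); first by rewrite (in_a_notin_c ea) addn0.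
case ec: (e \in c) => //=; have := (Uminus_c ec).1; lia.
Qed.

Lemma shift1_le_b : vle y1 b.
Proof.
apply/vleP => e; rewrite shiftE; case: ifP => [ea|_].
  by rewrite addn1; exact: Uplus_lt (Uplus_a ea).
by have := vleP _ _ (stable_le Hx) e; case: ifP => _ //; exact/leq_trans/leq_subr.
Qed.

Lemma inB_join_f_shift1 f : inB (inr f) (join_f f).
Proof. exact: inB_join (inB_restr _ (stable_le Hx)) (inB_restr _ shift1_le_b). Qed.

Lemma addv_le_join_f_shift1 p : p \in zip a c ->
  vle (addv (restr (inr (ef p.1)) x) p.1) (join_f (ef p.1)).
Proof.
move=> /mem_zip [p1a _]; apply/vleP => e; rewrite addvE [vjoin _ _ _]ffunE !restrE shiftE /=.
case: (eqVneq e p.1) => [->|_]; last by rewrite addn0 leq_maxl.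
by rewrite p1a eqxx addn1 leq_maxr.
Qed.

(* Along a legal pair [(a', d)], [C_f(x_f + 1^a')] already drops [d] by one unit. *)
Lemma choice_f_shift1_le f : vle (C (inr f) (join_f f)) (restr (inr f) y1).
Proof.
apply/vleP => d; have CYd := vleP _ _ (choice_le (HC _) (inB_join_f_shift1 f)) d.
case fd: (inc (inr f) d); last by move: CYd; rewrite [vjoin _ _ _]ffunE !restrE fd maxnn.
case dc: (d \in c); last first.
  apply: leq_trans CYd _; rewrite [vjoin _ _ _]ffunE !restrE shiftE dc fd.
  by case: ifP => _; lia.
move: fd => /= /eqP efd; have [[a' d'] pin /= dd] := zip_snd (eq_leq Hsize) dc; subst d'.
have /= efa := ef_pair pin; rewrite efd in efa; subst f.
have da : (d == a') = false.
  by apply: (contraFF _ (in_c_notin_a dc)) => /eqP ->; exact: (mem_zip pin).1.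
have /= := choice_meet (HC _) d (inB_join_f_shift1 _) (addv_le_join_f_shift1 pin).
have /= := legal_f_choice_eq (Hlegal_f pin).
rewrite addvE !restrE shiftE /= efa eqxx da (in_c_notin_a dc) dc; lia.
Qed.

Lemma vsize_choice_f_shift1 f : has (inc (inr f)) a ->
  vsize (restr (inr f) y1) <= vsize (C (inr f) (join_f f)).
Proof.
case/hasP => e ea /= /eqP <-.
have [[a' c'] pin /= ae] := zip_fst (eq_leq (esym Hsize)) ea; subst a'.
have /= := choice_vsize_mono (HC _) (inB_join_f_shift1 _) (addv_le_join_f_shift1 pin).
by rewrite (legal_f_vsize (Hlegal_f pin)) vsize_restr_shift1.
Qed.

Lemma choice_f_shift1 f : C (inr f) (join_f f) = restr (inr f) y1.
Proof.
case: (boolP (has (inc (inr f)) a)) => [ha|na].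
  exact: vle_vsize_eq (choice_f_shift1_le f) (vsize_choice_f_shift1 ha).
by rewrite restr_shift_off // vjoin_id (acceptable_fixed (stable_acceptable _ Hx)).
Qed.

Lemma shift1_le_wmove p d : p \in zip c (rot 1 a) -> (d \in a -> ew d = ew p.2 -> d = p.2) ->
  restr (inl (ew p.2)) y1 d <= wmove x p.1 p.2 d.
Proof.
case: p => [c' a'] pin /= ad; have [/= c'c] := mem_zip pin; rewrite mem_rot => a'a.
rewrite wmoveE !restrE shiftE /=; case: eqP => // ewd; case: ifP => da.
  rewrite (ad da ewd) eqxx; have -> /= : (a' == c') = false.
    by apply: (contraFF _ (in_a_notin_c a'a)) => /eqP ->.
  by rewrite subn0.
have -> : (d == a') = false by apply: (contraFF _ da) => /eqP ->.
case: (eqVneq d c') => [->|_]; first by rewrite c'c addn0.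
by case: ifP => _; rewrite /= addn0 subn0 ?leq_subr.
Qed.

Lemma Uplus_of_wmove_lt p z d : p \in zip c (rot 1 a) ->
  (forall d, restr (inl (ew p.2)) y1 d < z d -> Uplus x d) ->
  wmove x p.1 p.2 d < z d -> Uplus x d.
Proof.
move=> pin exc lt; case da: (d \in a); first exact: Uplus_a.
by apply: exc; apply: leq_ltn_trans lt; apply: shift1_le_wmove; rewrite ?da.
Qed.

(* The vectors [x_w + 1^a' - 1^c'] of the essential pairs at [w] are acceptable,
   have the size of [y1_w] and together cover it. *)
Lemma choice_w_shift1 w z : inB (inl w) z -> vle (restr (inl w) y1) z ->
  (forall d, restr (inl w) y1 d < z d -> Uplus x d) -> C (inl w) z = restr (inl w) y1.
Proof.
move=> Bz yz exc; case: (boolP (has (inc (inl w)) a)) => [|na]; last first.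
  rewrite restr_shift_off // in yz exc *.
  apply: (choice_eq_of_not_interesting (HC _) (stable_acceptable _ Hx) Bz yz) => d lt.
  have /eqP <- := inB_inc Bz (leq_ltn_trans (leq0n _) lt).
  exact: stable_not_interesting (exc d lt).
case/hasP => e; rewrite -(mem_rot 1) => ea /eqP ewe.
have [p0 p0in p0e] := zip_snd (eq_leq size_rot_a) ea.
apply: (choice_eq_of_cover (HC _) (P := fun p => p \in zip c (rot 1 a) /\ ew p.2 = w)
  (f := fun p => wmove x p.1 p.2) (i0 := p0)) => //.
- by rewrite p0e.
- by move=> p [/Hessential [[_ [_ [_ Ap]]] _] <-].
- by move=> p [/Hessential [lw _] <-]; rewrite (vsize_wmove lw) vsize_restr_shift1.
- move=> p d [pin ewp] lt; rewrite -ewp.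
  apply: (essential_not_interesting HC Hx (Hessential pin)).
    by apply: (Uplus_of_wmove_lt pin) lt; rewrite ewp.
  by have /eqP -> := inB_inc Bz (leq_ltn_trans (leq0n _) lt).
- move=> d; case: (boolP ((d \in a) && (ew d == w))) => [/andP [da /eqP ewd] | nd].
    rewrite -(mem_rot 1) in da; have [p pin pd] := zip_snd (eq_leq size_rot_a) da.
    exists p; first by rewrite pd.
    by have := shift1_le_wmove pin (fun _ _ => esym pd); rewrite pd ewd.
  exists p0; first by rewrite p0e.
  rewrite -ewe -p0e; apply: shift1_le_wmove => // da ewd.
  by move: nd; rewrite da ewd p0e ewe eqxx.
Qed.

Lemma shift1_stable : stable y1.
Proof.
have shift1_acc v : acceptable ew ef b C v (restr v y1).
  case: v => [w|f].
    apply: (acceptable_choice (HC _) (inB_restr _ shift1_le_b) (vle_refl _)).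
    by apply: choice_w_shift1 (inB_restr _ shift1_le_b) (vle_refl _) _ => d; rewrite ltnn.
  exact: (acceptable_choice (HC _) (inB_join_f_shift1 f) (vle_joinr _ _) (choice_f_shift1 f)).
split; first exact: (conj shift1_le_b shift1_acc).
move=> e [/interesting_setvP [n [Bn lt gt]] If].
have Ue := Uplus_of_choice_join HC (stable_le Hx) shift1_le_b (choice_f_shift1 _) If.
suff eqC : C (inl (ew e)) (setv (restr (inl (ew e)) y1) e n) = restr (inl (ew e)) y1.
  by move: gt; rewrite eqC ltnn.
apply: choice_w_shift1 Bn (vle_setv (ltnW lt)) _ => d.
by rewrite setvE; case: eqP => [->|_] //; rewrite ltnn.
Qed.

Lemma potential_shift lam : stable (shift x a c lam) ->
  potential x + lam * size a <= potential (shift x a c lam).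
Proof.
move=> Hl.
have inc_Uplus e : x e < shift x a c lam e -> Uplus x e.
  rewrite shiftE; case: ifP => [ea _|_]; first exact: Uplus_a.
  by case: ifP => _; [rewrite ltnNge leq_subr | rewrite ltnn].
have grow e : Uplus x e -> x e + lam * (e \in a) <= shift x a c lam e.
  move=> Ue; rewrite shiftE; case: ifP => ea; first by rewrite muln1.
  have -> : e \in c = false by apply/negP => /Uminus_c [_]; apply.
  by rewrite muln0 addn0.
have ua : uniq a by move: Huniq; rewrite cat_uniq => /andP [].
rewrite -(count_predT a) -(sum_mem_count _ ua) big_distrr /potential -big_split /=.
apply: leq_sum => e _; rewrite andbT; have yb := vleP _ _ (stable_le Hl) e.
case: asboolP => Ux; case: asboolP => Uy.
- exact: grow.
- exact: leq_trans (grow _ Ux) yb.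
- by case: (Ux (Uplus_antimono HC Hx Hl inc_Uplus Uy)).
- by case ea: (e \in a); [case: (Ux (Uplus_a ea)) | rewrite muln0 addn0].
Qed.

(* A rotation of length one would use two distinct edges joining the same [w] and [f]. *)
Lemma two_le_size_rotation : injective (fun e => (ew e, ef e)) -> a != [::] -> 1 < size a.
Proof.
move=> Hsimple a0; case Ea: a a0 => [|a1 [|a2 a']] // _.
have [c1 Ec] : exists c1, c = [:: c1].
  by move: Hsize; rewrite Ea; case: c => [|c1 [|]] //; exists c1.
have efc : ef c1 = ef a1 by apply: (ef_pair (p := (a1, c1))); rewrite Ea Ec mem_head.
have ewc : ew c1 = ew a1 by apply: (ew_pair (p := (c1, a1))); rewrite Ea Ec mem_head.
exfalso; move: Huniq; rewrite Ea Ec /= inE andbT => /negP; apply; apply/eqP/Hsimple.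
by rewrite /= efc ewc.
Qed.

Lemma rotation_step_potential lam : injective (fun e => (ew e, ef e)) -> a != [::] ->
  is_tau ew ef b C x a c lam ->
  stable (shift x a c lam) /\ potential x + 2 <= potential (shift x a c lam).
Proof.
move=> Hsimple a0 [Htau Hmax].
have lam1 : 0 < lam.
  apply: Hmax => i /andP [i1 i1']; have -> : i = 1 by apply/eqP; rewrite eqn_leq i1' i1.
  by split; [move=> e /Uminus_c [] | exact: shift1_stable].
have Hl : stable (shift x a c lam) by case: (Htau lam); rewrite ?lam1 ?leqnn.
split=> //; apply: leq_trans (potential_shift Hl); rewrite leq_add2l.
by rewrite -(mul1n 2) leq_mul // two_le_size_rotation.
Qed.

End Rotation.

Section Routes.
Variables (W F E : finType) (ew : E -> W) (ef : E -> F) (b : vec E).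
Variable C : (W + F)%type -> vec E -> vec E.
Hypothesis HC : forall v, choice_axioms ew ef b C v.
Hypothesis Hsimple : injective (fun e => (ew e, ef e)).

Local Notation darc := (darc ew ef b C).
Local Notation stable := (stable ew ef b C).
Local Notation potential := (potential ew ef b C).

Lemma darc_legal_f x e e' : darc x (e, true) (e', true) -> legal_f ew ef b C x e e'.
Proof. by case=> _ [_ /=]; intuition discriminate. Qed.

Lemma darc_essential x e e' : darc x (e, false) (e', false) -> essential ew ef b C x e e'.
Proof. by case=> _ [_ /=]; intuition discriminate. Qed.

Lemma rotation_pairs x a c : rotation ew ef b C x a c ->
  [/\ a != [::], size c = size a, uniq (a ++ c),
      forall p, p \in zip a c -> legal_f ew ef b C x p.1 p.2 &
      forall p, p \in zip c (rot 1 a) -> essential ew ef b C x p.1 p.2].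
Proof.
case: a => [|a0 a'] //; set a := a0 :: a' => -[Hsz [Hu H]].
split=> // p.
  case/(zip_nth a0 a0 (esym Hsz)) => i ik ->.
  by have /= [_ [_ arc _ _]] := H i ik; exact: darc_legal_f arc.
case/(zip_nth a0 a0 (etrans Hsz (esym (size_rot 1 a)))) => i; rewrite Hsz => ik ->.
by have /= [_ [_ _ _ arc]] := H i ik; rewrite nth_rot1 //; exact: darc_essential arc.
Qed.

Lemma route_step_potential x y : stable x -> route_step ew ef b C x y ->
  stable y /\ potential x + 2 <= potential y.
Proof.
move=> Hx [a [c [lam [/rotation_pairs [a0 Hsz Hu Hf Hw] [Htau ->]]]]].
exact: (rotation_step_potential HC Hx Hsz Hu Hf Hw Hsimple a0 Htau).
Qed.

Lemma full_route_potential xmin xmax xs : stable xmin ->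
  full_route ew ef b C xmin xmax xs -> stable xmax /\ 2 * (size xs).-1 <= potential xmax.
Proof.
case: xs => [|x0 xs] // Hmin [x0E [lastE Hsteps]].
suff inv i : i <= size xs ->
    stable (nth x0 (x0 :: xs) i) /\ 2 * i <= potential (nth x0 (x0 :: xs) i).
  by rewrite -lastE -nth_last; exact: inv.
elim: i => [|i IH] lt; first by rewrite x0E.
have [Si Pi] := IH (ltnW lt); have [Sj Pj] := route_step_potential Si (Hsteps i lt).
by split=> //; rewrite mulnS addnC; apply: leq_trans Pj; rewrite leq_add2r.
Qed.

End Routes.

Theorem lemma6p2 (W F E : finType) (ew : E -> W) (ef : E -> F)
  (b : {ffun E -> nat}) (C : (W + F)%type -> {ffun E -> nat} -> {ffun E -> nat})
  (Hsimple : injective (fun e => (ew e, ef e)))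
  (HC : forall v, choice_axioms ew ef b C v)
  (xmin xmax : {ffun E -> nat})
  (Hmin : stable ew ef b C xmin /\
          forall y, stable ew ef b C y -> prefF ew ef C xmin y)
  (Hmax : stable ew ef b C xmax /\
          forall y, stable ew ef b C y -> prefF ew ef C y xmax)
  (xs : seq {ffun E -> nat})
  (Hroute : full_route ew ef b C xmin xmax xs) :
  2 * (size xs).-1 <= (\max_(e : E) b e) * #|E|.
Proof.
have [Smax Pmax] := full_route_potential HC Hsimple Hmin.1 Hroute.
apply: (leq_trans Pmax); apply: (leq_trans (potential_le ew ef C (stable_le Smax))).
by rewrite mulnC -sum_nat_const; apply: leq_sum => e _; exact: leq_bigmax.
Qed.
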